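(* Let $G$ be a graph with degree sequence $(d_1, \ldots, d_n)$, where $d_1 \geq d_2 \geq \cdots \geq d_n$. Let $\Sigma$ be a signed graph with underlying graph $G$. Then $$l(\Sigma) \leq \sum_{i=1}^{l_0(\Sigma)} \left\lfloor \frac{d_i}{2} \right\rfloor.$$
   Context: A signed graph $\Sigma = (G,\sigma)$ consists of a finite graph $G$ (loops and multiple edges allowed) and a sign function $\sigma: E(G) \to \{+1,-1\}$. A circle is a connected nonempty $2$-regular subgraph; it is positive if the product of the signs of its edges is $+1$ and negative otherwise. $\Sigma$ is balanced if all its circles are positive. The frustration index $l(\Sigma)$ is the smallest number of edges whose deletion from $\Sigma$ leaves a balanced signed graph. The frustration number $l_0(\Sigma)$ is the smallest number of vertices whose deletion (together with all incident edges) from $\Sigma$ leaves a balanced signed graph. *)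

From mathcomp Require Import all_boot.
Set Implicit Arguments. Unset Strict Implicit. Unset Printing Implicit Defensive.

(* A signed graph with vertex set V, edge set E (loops and multiple edges
   allowed): each edge e has a pair of endpoints [ends e] (a loop has equal
   endpoints) and a sign; [neg e = true] means sigma(e) = -1. *)
Section SignedGraph.
Variables (V E : finType) (ends : E -> V * V) (neg : E -> bool).

Definition inc (e : E) (v : V) : nat := ((ends e).1 == v) + ((ends e).2 == v).

Definition deg_in (F : {set E}) (v : V) : nat := \sum_(e in F) inc e v.

Definition deg (v : V) : nat := deg_in [set: E] v.

Definition touches (C : {set E}) (v : V) : bool := [exists e in C, inc e v != 0].

Definition adj_in (C : {set E}) : rel V :=
  fun u w => [exists e in C, (ends e == (u, w)) || (ends e == (w, u))].

Definition is_circle (C : {set E}) : bool :=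
  [&& C != set0,
      [forall v, touches C v ==> (deg_in C v == 2)] &
      [forall u, forall w, touches C u ==> touches C w ==> connect (adj_in C) u w]].

Definition positive (C : {set E}) : bool := ~~ odd #|[set e in C | neg e]|.

Definition balanced_on (F : {set E}) : bool :=
  [forall C : {set E}, (C \subset F) ==> is_circle C ==> positive C].

Definition edges_avoiding (X : {set V}) : {set E} :=
  [set e | ((ends e).1 \notin X) && ((ends e).2 \notin X)].

Definition frustration_index : nat :=
  \big[minn/#|E|]_(S : {set E} | balanced_on (~: S)) #|S|.

Definition frustration_number : nat :=
  \big[minn/#|V|]_(X : {set V} | balanced_on (edges_avoiding X)) #|X|.

Definition degree_seq : seq nat := sort geq [seq deg v | v <- enum V].

End SignedGraph.

From mathcomp Require Import all_boot.
Set Implicit Arguments. Unset Strict Implicit. Unset Printing Implicit Defensive.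

(* By Harary's theorem a signed graph is balanced exactly when some switching
   s : V -> bool makes every edge positive.  Delete a minimum set X of
   l_0(Sigma) vertices; the rest is balanced, so it has such a switching.  Put
   the vertices of X back one at a time, each time choosing its switching value
   so that at most half of its incident edges become negative.  The negative
   edges at the end form a set whose deletion leaves a balanced graph, and there
   are at most \sum_(v in X) floor(d(v)/2) of them, which is at most the sum of
   the l_0(Sigma) largest terms floor(d_i/2). *)

Lemma card_set_sum_nat (T : finType) (A : {set T}) (P : pred T) :
  #|[set x in A | P x]| = \sum_(x in A) P x.
Proof.
rewrite -sum1_card big_mkcond [RHS]big_mkcond /=.
by apply: eq_bigr => x _; rewrite inE; case: (x \in A); case: (P x).
Qed.

Lemma sum_nat_mul_eq (T : finType) (f : T -> nat) (a : T) :
  \sum_(v : T) f v * (a == v) = f a.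
Proof.
rewrite (bigD1 a) //= eqxx muln1 big1 ?addn0 // => v /negbTE.
by rewrite eq_sym => ->; rewrite muln0.
Qed.

Lemma bigmin_le (I : eqType) (r : seq I) (P : pred I) (F : I -> nat) idx j :
  j \in r -> P j -> \big[minn/idx]_(i <- r | P i) F i <= F j.
Proof.
elim: r => //= i r IH; rewrite inE big_cons => /orP [/eqP <- -> | jr Pj].
  exact: geq_minl.
by case: (P i); [apply: leq_trans (geq_minr _ _) (IH jr Pj) | apply: IH].
Qed.

Lemma bigmin_attained (I : finType) (P : pred I) (F : I -> nat) idx i0 :
  P i0 -> F i0 <= idx -> exists2 i, P i & F i <= \big[minn/idx]_(i | P i) F i.
Proof.
move=> Pi0 le_i0; elim/big_rec: _ => [|j m Pj [i Pi le_im]]; first by exists i0.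
have [le_jm | lt_mj] := leqP (F j) m.
  by exists j; rewrite // leq_min leqnn.
by exists i; rewrite // leq_min le_im (leq_trans le_im (ltnW lt_mj)).
Qed.

Lemma sum_nth_take (f : nat -> nat) (r : seq nat) m :
  f 0 = 0 -> \sum_(i < m) f (nth 0 r i) = \sum_(x <- take m r) f x.
Proof.
move=> f0; elim: r m => [|x r IH] [|m].
- by rewrite big_ord0 big_nil.
- by rewrite big1 ?big_nil // => i _; rewrite nth_nil.
- by rewrite big_ord0 big_nil.
- by rewrite big_ord_recl /= big_cons IH.
Qed.

Lemma leq_sum_take (F : nat -> nat) (r : seq nat) k m :
  k <= m -> \sum_(x <- take k r) F x <= \sum_(x <- take m r) F x.
Proof.
move=> le_km; rewrite -(take_takel r le_km).
by rewrite -{2}(cat_take_drop k (take m r)) big_cat leq_addr.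
Qed.

Lemma leq_sum_subseq_take (f : nat -> nat) (r t : seq nat) :
  {homo f : x y / x <= y} -> sorted geq r -> subseq t r ->
  \sum_(x <- t) f x <= \sum_(x <- take (size t) r) f x.
Proof.
move=> f_mono; elim: r t => [|x r IH] t; first by move=> _; rewrite subseq0 => /eqP ->.
move=> sorted_xr; have sorted_r := path_sorted sorted_xr.
have x_max : all (geq x) r.
  by apply: order_path_min sorted_xr => y z w /= le_zy le_wz; apply: leq_trans le_wz le_zy.
case: t => [|y t] //=; case: eqP => [-> sub | _ sub].
  by rewrite !big_cons leq_add2l IH.
apply: leq_trans (IH _ sorted_r sub) _; rewrite big_cons.
have [lt_tr | le_rt] := ltnP (size t) (size r).
  rewrite (take_nth 0 lt_tr) -cats1 big_cat /= big_seq1 addnC leq_add2r.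
  exact/f_mono/(allP x_max)/mem_nth.
by rewrite !take_oversize ?leq_addl // (leq_trans le_rt).
Qed.

Section SignedGraph.
Variables (V E : finType) (ends : E -> V * V) (neg : E -> bool).

(* A switching [s] is read as a 2-colouring of the vertices; an edge is
   frustrated when its sign disagrees with whether it crosses the colouring,
   i.e. when it is negative after switching the vertices coloured [true]. *)
Definition frustrated (s : V -> bool) (e : E) : bool :=
  neg e != (s (ends e).1 != s (ends e).2).

Definition frustrated_edges (s : V -> bool) (F : {set E}) : {set E} :=
  [set e in F | frustrated s e].

Definition consistent_on (s : V -> bool) (F : {set E}) : Prop :=
  {in F, forall e, neg e = (s (ends e).1 != s (ends e).2)}.

Definition joins (x : E) (a b : V) : bool := (ends x == (a, b)) || (ends x == (b, a)).

Lemma inc_joins x a b v : joins x a b -> inc ends x v = (a == v) + (b == v).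
Proof. by rewrite /inc => /orP [] /eqP -> //=; rewrite addnC. Qed.

Lemma adj_in_sym (C : {set E}) : symmetric (adj_in ends C).
Proof. by move=> a b; apply: eq_existsb => x; rewrite orbC. Qed.

Lemma touches_deg_gt0 (C : {set E}) v : touches ends C v -> 0 < deg_in ends C v.
Proof.
case/existsP => x /andP [xC inc_x]; rewrite /deg_in (bigD1 x) //=.
by rewrite lt0n addn_eq0 negb_and inc_x.
Qed.

Lemma balanced_onS (F G : {set E}) :
  G \subset F -> balanced_on ends neg F -> balanced_on ends neg G.
Proof.
move=> sGF /forallP balF; apply/forallP => C; apply/implyP => sCG.
by apply: (implyP (balF C)); apply: subset_trans sGF.
Qed.

Lemma circle_deg_even (C : {set E}) v : is_circle ends C -> ~~ odd (deg_in ends C v).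
Proof.
case/and3P => _ /forallP /(_ v) + _.
have [/touches_deg_gt0 _ /eqP -> // | untouched _] := boolP (touches ends C v).
rewrite /deg_in big1 // => e eC; apply/eqP; apply: contraNT untouched => inc_e.
by apply/existsP; exists e; rewrite eC.
Qed.

(* Counting the edge-ends at the vertices with [s v = true]: an edge with exactly
   one such end is negative, and the others contribute an even amount. *)
Lemma sum_neg_consistent s (C : {set E}) : consistent_on s C ->
  \sum_(e in C) neg e + 2 * \sum_(e in C) (s (ends e).1 && s (ends e).2)
  = \sum_(v : V) s v * deg_in ends C v.
Proof.
move=> cons_s; rewrite big_distrr -big_split /=.
under [RHS]eq_bigr => v _ do rewrite /deg_in big_distrr.
rewrite exchange_big /=; apply: eq_bigr => e eC.
under eq_bigr => v _ do rewrite /inc mulnDr.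
rewrite big_split /= !sum_nat_mul_eq cons_s //.
by case: (s (ends e).1); case: (s (ends e).2).
Qed.

Lemma consistent_balanced s F : consistent_on s F -> balanced_on ends neg F.
Proof.
move=> cons_s; apply/forallP => C; apply/implyP => sCF; apply/implyP => circC.
have cons_C : consistent_on s C by move=> e /(subsetP sCF); apply: cons_s.
have even_sum : ~~ odd (\sum_(v : V) s v * deg_in ends C v).
  elim/big_rec: _ => // v m _ even_m.
  by rewrite oddD oddM (negbTE (circle_deg_even v circC)) andbF (negbTE even_m).
move: even_sum; rewrite -(sum_neg_consistent cons_C) oddD oddM addbF.
by rewrite /positive card_set_sum_nat.
Qed.

Lemma frustrated_edges_consistent s F : consistent_on s F -> frustrated_edges s F = set0.
Proof.
move=> cons_s; apply/eqP; rewrite -subset0; apply/subsetP => x /setIdP [x_in].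
by rewrite /frustrated cons_s ?eqxx.
Qed.

Lemma edges_avoiding0 : edges_avoiding ends set0 = [set: E].
Proof. by apply/setP => x; rewrite !inE. Qed.

Lemma frustration_index_le_frustrated s :
  frustration_index ends neg <= #|frustrated_edges s [set: E]|.
Proof.
apply: bigmin_le (mem_index_enum _) _; apply: (@consistent_balanced s) => x.
by rewrite !inE /= negbK => /eqP.
Qed.

Lemma frustration_number_witness :
  exists2 X : {set V}, balanced_on ends neg (edges_avoiding ends X)
                     & #|X| <= frustration_number ends neg.
Proof.
have balT : balanced_on ends neg (edges_avoiding ends setT).
  by apply: (@consistent_balanced xpred0) => x; rewrite !inE.
apply: (@bigmin_attained _ (fun X => balanced_on ends neg (edges_avoiding ends X))
                          _ _ setT balT).
by rewrite cardsT.
Qed.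

(* [d] is a dummy default, never returned when [a] and [b] are adjacent in [F]. *)
Definition edge_between (F : {set E}) (d : E) (a b : V) : E :=
  odflt d [pick x in F | joins x a b].

Definition walk_edges (F : {set E}) (d : E) (u : V) (p : seq V) : seq E :=
  pairmap (edge_between F d) u p.

Lemma edge_betweenP F d a b :
  adj_in ends F a b -> edge_between F d a b \in F /\ joins (edge_between F d a b) a b.
Proof.
case/existsP => x /andP [xF joins_x]; rewrite /edge_between.
by case: pickP => [y /andP [] // | /(_ x)]; rewrite /joins xF joins_x.
Qed.

Section Walk.
Variables (F : {set E}) (d : E).

Lemma walk_edges_sub u p : path (adj_in ends F) u p -> {subset walk_edges F d u p <= F}.
Proof.
elim: p u => [|y p IH] u //= /andP [adj_uy path_p] x.
have [fF _] := edge_betweenP d adj_uy.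
by rewrite inE => /orP [/eqP -> // | /(IH _ path_p)].
Qed.

Lemma walk_edges_ends u p x : path (adj_in ends F) u p -> x \in walk_edges F d u p ->
  ((ends x).1 \in u :: p) && ((ends x).2 \in u :: p).
Proof.
elim: p u => [|y p IH] u //= /andP [adj_uy path_p].
have [_ /orP joins_f] := edge_betweenP d adj_uy.
rewrite inE => /orP [/eqP -> | /(IH _ path_p)].
  by case: joins_f => /eqP -> /=; rewrite !inE !eqxx ?orbT.
by rewrite !inE => /andP [-> ->]; rewrite !orbT.
Qed.

Lemma walk_edges_uniq u p : path (adj_in ends F) u p -> uniq (u :: p) ->
  uniq (walk_edges F d u p).
Proof.
elim: p u => [|y p IH] u //= /andP [adj_uy path_p] /andP [u_notin uniq_p].
rewrite IH // andbT; apply/negP => /(walk_edges_ends path_p).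
have [_ /orP joins_f] := edge_betweenP d adj_uy.
by case: joins_f => /eqP -> /= /andP [in1 in2]; move: u_notin; rewrite ?in1 ?in2.
Qed.

(* An inner vertex of the walk is met by two edges, its ends by one. *)
Lemma sum_inc_walk_edges u p v : path (adj_in ends F) u p ->
  \sum_(x <- walk_edges F d u p) inc ends x v + (last u p == v)
  = count_mem v (u :: p) + count_mem v p.
Proof.
elim: p u => [|y p IH] u /=; first by rewrite big_nil !addn0.
case/andP => adj_uy path_p; have [_ joins_f] := edge_betweenP d adj_uy.
rewrite big_cons (inc_joins v joins_f) -addnA IH //= !addnA.
by congr (_ + _); rewrite addnAC.
Qed.

Lemma odd_neg_walk_edges s u p : path (adj_in ends F) u p -> consistent_on s F ->
  odd (\sum_(x <- walk_edges F d u p) neg x) = (s u != s (last u p)).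
Proof.
move=> + cons_s; elim: p u => [|y p IH] u /=; first by rewrite big_nil eqxx.
case/andP => adj_uy path_p; have [fF /orP joins_f] := edge_betweenP d adj_uy.
rewrite big_cons oddD IH // cons_s //.
by case: joins_f => /eqP -> /=; case: (s u); case: (s y); case: (s (last y p)).
Qed.

Lemma path_walk_edges (C : {set E}) u p : path (adj_in ends F) u p ->
  {subset walk_edges F d u p <= C} -> path (adj_in ends C) u p.
Proof.
elim: p u => [|y p IH] u //= /andP [adj_uy path_p] sub.
have [_ joins_f] := edge_betweenP d adj_uy.
rewrite IH ?andbT => [|//|x x_in]; last by apply: sub; rewrite inE x_in orbT.
by apply/existsP; exists (edge_between F d u y); rewrite sub ?mem_head //; exact: joins_f.
Qed.

End Walk.

Section ClosingEdge.
Variables (F : {set E}) (e : E) (u : V) (p : seq V).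
Hypotheses (ends_e : ends e = (u, last u p)) (e_notin : e \notin F)
  (path_p : path (adj_in ends F) u p) (uniq_p : uniq (u :: p)).

Let C := [set x | x \in e :: walk_edges F e u p].

Lemma sum_closed_walk (G : E -> nat) :
  \sum_(x in C) G x = \sum_(x <- e :: walk_edges F e u p) G x.
Proof.
rewrite big_uniq /=; last first.
  by rewrite walk_edges_uniq // andbT; apply: contra e_notin => /walk_edges_sub; apply.
by apply: eq_bigl => x; rewrite inE.
Qed.

Lemma deg_closed_walk v : deg_in ends C v = if v \in u :: p then 2 else 0.
Proof.
move: uniq_p => /= /andP [u_notin uniq_p'].
rewrite /deg_in sum_closed_walk big_cons {1}/inc ends_e /= addnAC -addnA.
rewrite sum_inc_walk_edges // addnA /= (count_uniq_mem _ uniq_p') inE.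
by case: (eqVneq u v) => [<- | _]; [rewrite (negbTE u_notin) | case: (v \in p)].
Qed.

Lemma is_circle_closed_walk : is_circle ends C.
Proof.
have path_C : path (adj_in ends C) u p.
  apply: (path_walk_edges (d := e) path_p) => x x_in.
  by rewrite inE in_cons x_in orbT.
have connect_u c : 0 < deg_in ends C c -> connect (adj_in ends C) u c.
  by rewrite deg_closed_walk; case: ifP => // c_in _; apply: path_connect path_C _ c_in.
apply/and3P; split.
- by apply/set0Pn; exists e; rewrite inE mem_head.
- apply/forallP => v; apply/implyP => /touches_deg_gt0.
  by rewrite deg_closed_walk; case: (v \in u :: p).
- apply/forallP => a; apply/forallP => b.
  apply/implyP => /touches_deg_gt0 /connect_u ua; apply/implyP => /touches_deg_gt0 /connect_u ub.
  by apply: connect_trans ub; rewrite (sym_connect_sym (adj_in_sym C)).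
Qed.

Lemma closing_frustrated_unbalanced s : consistent_on s F ->
  neg e != (s u != s (last u p)) -> ~~ balanced_on ends neg (e |: F).
Proof.
move=> cons_s frustrated_e; apply/negP => /forallP /(_ C) /implyP bal.
have sCF : C \subset e |: F.
  apply/subsetP => x; rewrite !inE => /orP [-> // | /(walk_edges_sub path_p) ->].
  by rewrite orbT.
move: (implyP (bal sCF) is_circle_closed_walk).
rewrite /positive card_set_sum_nat sum_closed_walk big_cons oddD.
rewrite (odd_neg_walk_edges e path_p cons_s).
by move: (neg e) (s u != s (last u p)) frustrated_e => [] [].
Qed.

End ClosingEdge.

(* Harary: delete an edge [e = uw]; if it is frustrated for a switching of the
   rest, either [u] and [w] are joined there (and a negative circle appears) or
   switching the component of [u] repairs [e]. *)
Lemma balanced_consistent F : balanced_on ends neg F -> exists s, consistent_on s F.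
Proof.
move: {2}#|F| (leqnn #|F|) => n; elim: n F => [|n IH] F.
  by rewrite leqn0 cards_eq0 => /eqP -> _; exists xpred0 => e; rewrite inE.
have [-> _ _ | [e eF] szF balF] := set_0Vmem F; first by exists xpred0 => e; rewrite inE.
set F' := F :\ e.
have [s cons_s] : exists s, consistent_on s F'.
  by apply: IH (balanced_onS (subsetDl _ _) balF); move: szF; rewrite (cardsD1 e F) eF.
case ends_e : (ends e) => [u w].
have F_split x : x \in F -> x = e \/ x \in F'.
  by move=> xF; case: (eqVneq x e) => [-> | xe]; [left | right; rewrite !inE xe].
have [consistent_e | frustrated_e] := eqVneq (neg e) (s u != s w).
  by exists s => x /F_split [-> | /cons_s //]; rewrite ends_e.
have [/connectP [p0 path0 w_last] | disconnected] := boolP (connect (adj_in ends F') u w).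
  case: (shortenP path0) w_last => p path_p uniq_p _ w_last; subst w.
  have e_notin : e \notin F' by rewrite !inE eqxx.
  have := closing_frustrated_unbalanced ends_e e_notin path_p uniq_p cons_s frustrated_e.
  by rewrite /F' setD1K // balF.
exists (fun v => s v (+) connect (adj_in ends F') u v) => x /F_split [-> | xF'].
  rewrite ends_e /= connect0 (negbTE disconnected) addbF.
  by move: frustrated_e; case: (neg e); case: (s u); case: (s w).
have adj_x : adj_in ends F' (ends x).1 (ends x).2.
  by apply/existsP; exists x; rewrite xF' /joins -surjective_pairing eqxx.
have -> : connect (adj_in ends F') u (ends x).2 = connect (adj_in ends F') u (ends x).1.
  apply/idP/idP => conn; apply: connect_trans conn (connect1 _) => //.
  by rewrite adj_in_sym.
by rewrite (cons_s x xF'); case: (s _); case: (s _); case: connect.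
Qed.

(* Of the two values at [v], each non-loop edge at [v] is frustrated for at most
   one, and a loop contributes 2 to the degree. *)
Lemma switch_vertex s v :
  exists b, #|[set x | (inc ends x v != 0) && frustrated [eta s with v |-> b] x]|
            <= (deg ends v)./2.
Proof.
set A := fun b => [set x | (inc ends x v != 0) && frustrated [eta s with v |-> b] x].
have le_deg : #|A true| + #|A false| <= deg ends v.
  rewrite /deg /deg_in -!sum1_card [X in X + _]big_mkcond [X in _ + X]big_mkcond.
  rewrite -big_split [X in _ <= X]big_mkcond /=; apply: leq_sum => x _.
  rewrite !inE /frustrated /inc /=.
  case: ((ends x).1 == v); case: ((ends x).2 == v) => //=;
  by case: (neg x); case: (s (ends x).1); case: (s (ends x).2).
have [le_tf | lt_ft] := leqP #|A true| #|A false|; [exists true | exists false];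
  rewrite -/(A _) geq_half_double -addnn; apply: leq_trans le_deg.
- by rewrite leq_add2l.
- by rewrite leq_add2r ltnW.
Qed.

Lemma switch_extension (Y Z : {set V}) s0 : exists s,
  #|frustrated_edges s (edges_avoiding ends Z)|
  <= #|frustrated_edges s0 (edges_avoiding ends (Y :|: Z))| + \sum_(v in Y) (deg ends v)./2.
Proof.
move: {2}#|Y| (leqnn #|Y|) => n; elim: n Y Z => [|n IH] Y Z szY;
  have [-> | [v vY]] := set_0Vmem Y; try by exists s0; rewrite set0U big_set0 addn0.
  by move: szY; rewrite (cardsD1 v) vY.
have [s' le_s'] : exists s', #|frustrated_edges s' (edges_avoiding ends (v |: Z))|
    <= #|frustrated_edges s0 (edges_avoiding ends (Y :|: Z))|
       + \sum_(y in Y :\ v) (deg ends y)./2.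
  have [|s' le_s'] := IH (Y :\ v) (v |: Z); first by move: szY; rewrite (cardsD1 v) vY.
  by exists s'; rewrite setUA [(Y :\ v) :|: _]setUC setD1K in le_s'.
have [b le_b] := switch_vertex s' v.
exists [eta s' with v |-> b].
set A := [set x | _ && _] in le_b.
have sub : frustrated_edges [eta s' with v |-> b] (edges_avoiding ends Z)
           \subset frustrated_edges s' (edges_avoiding ends (v |: Z)) :|: A.
  apply/subsetP => x; rewrite !inE => /andP [/andP [end1 end2] frust].
  have [inc_x | ] := boolP (inc ends x v != 0); first by apply/orP; right; apply/andP.
  rewrite negbK /inc addn_eq0 !eqb0 => /andP [ne1 ne2].
  move: frust; rewrite /frustrated /= (negbTE ne1) (negbTE ne2) => ->.
  by rewrite (negbTE end1) (negbTE end2).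
apply: leq_trans (subset_leq_card sub) _; apply: leq_trans (leq_card_setU _ _) _.
rewrite (bigD1 v) //= addnCA addnC leq_add // (leq_trans le_s') //.
by apply: eq_leq; congr (_ + _); apply: eq_bigl => y; rewrite !inE andbC.
Qed.

Lemma sum_half_deg_le_degree_seq (X : {set V}) k : #|X| <= k ->
  \sum_(v in X) (deg ends v)./2 <= \sum_(i < k) (nth 0 (degree_seq ends) i)./2.
Proof.
move=> le_Xk; rewrite sum_nth_take //; apply: leq_trans (leq_sum_take _ _ le_Xk).
set t := [seq deg ends v | v <- enum X].
rewrite -big_enum -(big_map (deg ends) predT (fun d => d./2)) -/t.
rewrite -(perm_big _ (permEl (perm_sort geq t))).
have -> : #|X| = size (sort geq t) by rewrite size_sort size_map cardE.
have geq_total : total geq by move=> a b; apply: leq_total.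
have geq_trans : transitive geq.
  by move=> b a c /= le_ba le_cb; apply: leq_trans le_cb le_ba.
apply: leq_sum_subseq_take; [exact: half_leq | exact: sort_sorted |].
apply: (subseq_sort geq_total geq_trans).
by apply: map_subseq; rewrite enumT; apply: filter_subseq.
Qed.

End SignedGraph.

Theorem proposition2 (V E : finType) (ends : E -> V * V) (neg : E -> bool) :
  frustration_index ends neg <=
  \sum_(i < frustration_number ends neg)
     (nth 0 (degree_seq ends) i)./2.
Proof.
have [X balX le_X] := frustration_number_witness ends neg.
have [s0 /frustrated_edges_consistent unfrustrated] := balanced_consistent balX.
have [s] := switch_extension ends neg X set0 s0.
rewrite setU0 unfrustrated cards0 add0n edges_avoiding0 => le_s.
apply: leq_trans (frustration_index_le_frustrated ends neg s) (leq_trans le_s _).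
exact: sum_half_deg_le_degree_seq.
Qed.
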